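(* Assume Assumptions A and B, with $F$ the supercell of Assumption B. There exist constants $\delta>0$ and $n\ge1$ such that for every cell $K$ and every admissible configuration $X\in\Omega$ with respect to which $K$ is incorrect, either $X_{K^{(1)}}=\emptyset$, or there exists $x\in X_{K^{(n)}}$ with $p_*\,v(x\mid X)\ge\mu_x+\delta$.
   Context: Setup. Fix $d\ge1$, a non-degenerate real $d\times d$ matrix $B$, the lattice $\mathbb{L}=B\mathbb{Z}^d$, and a set $\mathbb{G}\subset\mathbb{R}^d$ that is the union of finitely many disjoint translates of $\mathbb{L}$. Fix non-empty bounded sets $T_1,\dots,T_k\subset\mathbb{R}^d$ (tiles) and a unit vector $\vec\mu=(\mu_1,\dots,\mu_k)\in\mathbb{R}^k$ with $\mu_1,\dots,\mu_k>0$. An admissible configuration is a map $\omega:\mathbb{G}\to\{0,1,\dots,k\}$ such that $\operatorname{int}(u+T_{\omega(u)})\cap\operatorname{int}(v+T_{\omega(v)})=\emptyset$ for all distinct $u,v\in\mathbb{G}$ with $\omega(u),\omega(v)\neq0$; it is identified with the set $X=\{(v,\omega(v)):v\in\mathbb{G},\ \omega(v)\neq0\}$ and called non-empty if this set is non-empty. For $x=(v,i)\in X$ write $T_x=v+T_i$, $\mu_x=\mu_i$; for $t\in\mathbb{L}$ write $t+x=(t+v,i)$, $t+X=\{t+x:x\in X\}$; for $\Lambda\subset\mathbb{R}^d$ write $X_\Lambda=\{(v,i)\in X:v\in\Lambda\}$. $\Omega$ is the set of admissible configurations with the topology of local convergence: $X_n\to X$ iff for every bounded $\Lambda\subset\mathbb{R}^d$,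 $(X_n)_\Lambda=X_\Lambda$ for all large $n$. A configuration is periodic if it is non-empty and invariant under translation by a full-rank sublattice of $\mathbb{L}$. Volume allocation. Let $S\subset\mathbb{R}^d$ be an $\mathbb{L}$-invariant set with an $\mathbb{L}$-invariant measure $\lambda$. A volume allocation is a family of measurable functions $\phi_x(\cdot\mid X):S\to[0,1]$, one for each non-empty $X\in\Omega$ and $x\in X$, such that (i) $\phi_{t+x}(t+s\mid t+X)=\phi_x(s\mid X)$ for $\lambda$-a.e. $s$, for all $t\in\mathbb{L}$; (ii) whenever $X_n\to X$ in $\Omega$ and $x\in X_n$ for all $n$, $x\in X$, then $\liminf_n\phi_x(\cdot\mid X_n)\ge\phi_x(\cdot\mid X)$ $\lambda$-a.e.; (iii) $\sum_{x\in X}\phi_x(\cdot\mid X)=1$ $\lambda$-a.e. The allocated volume is $v(x\mid X)=\int_S\phi_x(s\mid X)\,\lambda(ds)$. Assumption A. There exist a volume allocation and $p_*>0$ such that (a) $p_*\,v(x\mid X)\ge\mu_x$ for every non-empty $X\in\Omega$ and $x\in X$; (b) there are only finitely many non-empty $\overline X\in\Omega$, called perfect configurations, with $p_*\,v(x\mid\overline X)=\mu_x$ for all $x\in\overline X$. Supercells. For a full-rank sublattice $\mathbb{K}\subset\mathbb{L}$, a supercell of $\mathbb{K}$ is a set $G=A[0,1)^d$ with $A\mathbb{Z}^d$ a full-rank sublattice of $\mathbb{K}$; its grid is $\mathcal{L}^G=A\mathbb{Z}^d$. A supercell of a periodic configuration $X$ is a supercell of $\{t\in\mathbb{L}:t+X=X\}$;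 a supercell common to several periodic configurations is a supercell of each of them. For $G=A[0,1)^d$ and $n\ge0$ put $G^{(n)}=\bigcup_{m\in\{-n,\dots,n\}^d}(Am+G)$. For a supercell $F$, cells are the sets $t+F$, $t\in\mathcal{L}^F$, and a set is $F$-measurable if it is a union of cells. $F$ is larger than the interaction radius if whenever $\Lambda,\Lambda'$ are $F$-measurable with disjoint closures, $X,X'\in\Omega$, $x\in X_\Lambda$, $y\in X'_{\Lambda'}$, then $\operatorname{int}T_x\cap\operatorname{int}T_y=\emptyset$. For a perfect $\overline X$ and $X\in\Omega$, a cell $K$ is $\overline X$-correct with respect to $X$ if $X_{K^{(1)}}=\overline X_{K^{(1)}}$; $K$ is correct if it is $\overline X$-correct for some perfect $\overline X$, and incorrect otherwise. Assumption B. There is a supercell $F$ common to all perfect configurations and larger than the interaction radius such that, for every perfect $\overline X$ and every $X\in\Omega$ with respect to which $F$ is $\overline X$-correct, $\phi_x(\cdot\mid X)=\phi_x(\cdot\mid\overline X)$ $\lambda$-a.e. for every $x\in X_F$. *)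

From HB Require Import structures.
From mathcomp Require Import all_boot all_order all_algebra.
From mathcomp Require Import all_classical all_reals all_analysis.
Set Implicit Arguments. Unset Strict Implicit. Unset Printing Implicit Defensive.
Import Order.TTheory GRing.Theory Num.Theory.
Import numFieldNormedType.Exports.
Local Open Scope classical_set_scope.
Local Open Scope ring_scope.

Section Tilings.
Variables (R : realType) (d k : nat).

Definition Vec := 'cV[R]_d.
(* R^d with its Borel sigma-algebra (same carrier as Vec) *)
Definition BVec := g_sigma_algebraType (@open Vec).

(* configurations, identified with sets of pairs (v, i), tile index i : 'I_k
   standing for tile number i+1 *)
Definition Conf := set (Vec * 'I_k).

Definition intvec (z : 'cV[int]_d) : Vec := map_mx (fun a : int => a%:~R) z.

Definition lat (M : 'M[R]_d) : set Vec := [set M *m intvec z | z in [set: 'cV[int]_d]].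

Definition union_of_translates (B : 'M[R]_d) (G : set Vec) :=
  exists a : seq Vec,
    (forall i j, (i < size a)%N -> (j < size a)%N -> i != j ->
       [set nth 0 a i + t | t in lat B] `&` [set nth 0 a j + t | t in lat B] = set0)
    /\ G = [set y | exists i, (i < size a)%N /\ exists2 t, lat B t & y = nth 0 a i + t].

Definition tile (T : 'I_k -> set Vec) (x : Vec * 'I_k) : set Vec :=
  [set x.1 + y | y in T x.2].

Definition shiftp (t : Vec) (x : Vec * 'I_k) : Vec * 'I_k := (t + x.1, x.2).
Definition shiftc (t : Vec) (X : Conf) : Conf := shiftp t @` X.

Definition restr (X : Conf) (L : set Vec) : Conf := [set x | X x /\ L x.1].

Definition admissible (G : set Vec) (T : 'I_k -> set Vec) (X : Conf) :=
  [/\ (forall x, X x -> G x.1),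
      (forall x y, X x -> X y -> x.1 = y.1 -> x = y) &
      (forall x y, X x -> X y -> x.1 <> y.1 ->
         interior (tile T x) `&` interior (tile T y) = set0)].

Definition local_conv (Xn : nat -> Conf) (X : Conf) :=
  forall L : set Vec, bounded_set L ->
    exists N, forall n, (N <= n)%N -> restr (Xn n) L = restr X L.

Definition invariant_space (B : 'M[R]_d) (S : set BVec)
    (lam : {measure set BVec -> \bar R}) :=
  [/\ measurable S,
      (forall t s, lat B t -> (S s <-> S ((t + (s : Vec)) : BVec))) &
      (forall t (A : set BVec), lat B t -> measurable A -> A `<=` S ->
         lam [set s : BVec | A ((t + (s : Vec)) : BVec)] = lam A)].

Definition Phi := Conf -> Vec * 'I_k -> BVec -> R.

Definition volume_allocation (B : 'M[R]_d) (G : set Vec) (T : 'I_k -> set Vec)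
    (S : set BVec) (lam : {measure set BVec -> \bar R}) (phi : Phi) :=
  [/\ (forall X x, admissible G T X -> X !=set0 -> X x ->
         measurable_fun S (phi X x) /\
         forall s, S s -> 0 <= phi X x s <= 1),
      (* (i) *)
      (forall X x t, admissible G T X -> X !=set0 -> X x -> lat B t ->
         {ae lam, forall s : BVec, S s ->
            phi (shiftc t X) (shiftp t x) ((t + (s : Vec)) : BVec) = phi X x s}),
      (* (ii) *)
      (forall (Xn : nat -> Conf) X x,
         (forall n, admissible G T (Xn n)) -> admissible G T X ->
         local_conv Xn X -> (forall n, Xn n x) -> X x ->
         {ae lam, forall s : BVec, S s ->
            ((phi X x s)%:E <= limn_einf (fun n => (phi (Xn n) x s)%:E))%E}) &
      (* (iii) *)
      (forall X, admissible G T X -> X !=set0 ->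
         {ae lam, forall s : BVec, S s -> (\esum_(x in X) (phi X x s)%:E)%E = 1%E})].

Definition vol (S : set BVec) (lam : {measure set BVec -> \bar R}) (phi : Phi)
    (X : Conf) (x : Vec * 'I_k) : \bar R :=
  (\int[lam]_(s in S) (phi X x s)%:E)%E.

Definition perfect (G : set Vec) (T : 'I_k -> set Vec) (mu : 'I_k -> R)
    (S : set BVec) (lam : {measure set BVec -> \bar R}) (phi : Phi) (p : R)
    (X : Conf) :=
  [/\ admissible G T X, X !=set0 &
      forall x, X x -> (p%:E * vol S lam phi X x)%E = (mu x.2)%:E].

Definition assumptionA (G : set Vec) (T : 'I_k -> set Vec) (mu : 'I_k -> R)
    (S : set BVec) (lam : {measure set BVec -> \bar R}) (phi : Phi) (p : R) :=
  [/\ 0 < p,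
      (forall X x, admissible G T X -> X !=set0 -> X x ->
         ((mu x.2)%:E <= p%:E * vol S lam phi X x)%E) &
      finite_set (perfect G T mu S lam phi p)].

Definition periods (B : 'M[R]_d) (X : Conf) : set Vec :=
  [set t | lat B t /\ shiftc t X = X].

Definition periodic (B : 'M[R]_d) (X : Conf) :=
  X !=set0 /\ exists M : 'M[R]_d, M \in unitmx /\ lat M `<=` periods B X.

(* supercell A[0,1)^d (represented by the matrix A), with grid lat A *)
Definition unit_cube : set Vec := [set u | forall i, 0 <= u i 0 < 1].

Definition cell (A : 'M[R]_d) (t : Vec) : set Vec :=
  [set t + A *m u | u in unit_cube].

Definition supercell_of (B : 'M[R]_d) (X : Conf) (A : 'M[R]_d) :=
  [/\ periodic B X, A \in unitmx & lat A `<=` periods B X].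

Definition cellN (A : 'M[R]_d) (t : Vec) (n : nat) : set Vec :=
  [set y | exists m : 'cV[int]_d,
     (forall i, `|m i 0| <= n%:Z) /\ cell A (t + A *m intvec m) y].

Definition cell_measurable (A : 'M[R]_d) (L : set Vec) :=
  exists J : set Vec, J `<=` lat A /\ L = \bigcup_(t in J) cell A t.

Definition larger_than_radius (G : set Vec) (T : 'I_k -> set Vec) (A : 'M[R]_d) :=
  forall L L' : set Vec, cell_measurable A L -> cell_measurable A L' ->
    closure L `&` closure L' = set0 ->
    forall X X' x y, admissible G T X -> admissible G T X' ->
      restr X L x -> restr X' L' y ->
      interior (tile T x) `&` interior (tile T y) = set0.

Definition correct_wrt (A : 'M[R]_d) (t : Vec) (Xb X : Conf) :=
  restr X (cellN A t 1) = restr Xb (cellN A t 1).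

Definition assumptionB (B : 'M[R]_d) (G : set Vec) (T : 'I_k -> set Vec)
    (mu : 'I_k -> R) (S : set BVec) (lam : {measure set BVec -> \bar R})
    (phi : Phi) (p : R) (A : 'M[R]_d) :=
  [/\ A \in unitmx /\ lat A `<=` lat B,
      (forall Xb, perfect G T mu S lam phi p Xb -> supercell_of B Xb A),
      larger_than_radius G T A &
      (forall Xb X, perfect G T mu S lam phi p Xb -> admissible G T X ->
         correct_wrt A 0 Xb X ->
         forall x, restr X (cell A 0) x ->
           {ae lam, forall s : BVec, S s -> phi X x s = phi Xb x s})].

End Tilings.

(** By contradiction and compactness.  If no [delta] and [n] worked, then for
    every [m] there would be an admissible configuration (translated so that
    the offending cell is at the origin) whose origin cell is incorrect and
    nonempty, while every tile [x] based in [K^(m+1)] has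
    [p_* v(x|X) < mu_x + 1/(m+1)].  Configurations are sequentially compact
    for local convergence (a diagonal argument over the countably many sites
    of [G]), so a subsequence converges to some [X].  The allocated volume is
    lower semicontinuous (property (ii) and Fatou's lemma), hence every tile
    of [X] has [p_* v(x|X) <= mu_x]; with Assumption A this makes [X]
    perfect, and [X] is nonempty because it agrees with the sequence near the
    origin cell.  But then the origin cell is [X]-correct for the late terms
    of the sequence, a contradiction. *)

From HB Require Import structures.
From mathcomp Require Import all_boot all_order all_algebra.
From mathcomp Require Import all_classical all_reals all_analysis.
From mathcomp Require Import measurable_realfun zify.
Import Order.TTheory GRing.Theory Num.Theory.
Import numFieldNormedType.Exports.

Set Implicit Arguments.
Unset Strict Implicit.
Unset Printing Implicit Defensive.

Local Open Scope classical_set_scope.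
Local Open Scope ring_scope.

Section Lattice.
Variables (R : realType) (d : nat).
Implicit Types (M : 'M[R]_d) (t u v : Vec R d).

Lemma latD M u v : lat M u -> lat M v -> lat M (u + v).
Proof.
by move=> [z1 _ <-] [z2 _ <-]; exists (z1 + z2) => //; rewrite /intvec map_mxD mulmxDr.
Qed.

Lemma latN M u : lat M u -> lat M (- u).
Proof. by move=> [z _ <-]; exists (- z) => //; rewrite /intvec map_mxN mulmxN. Qed.

Lemma translates_latD M G t v : union_of_translates M G -> lat M t -> G v -> G (t + v).
Proof.
move=> [a [_ ->]] Mt [i [ia [s Ms ->]]].
by exists i; split => //; exists (t + s); [exact: latD | rewrite addrCA].
Qed.

End Lattice.

Section Translation.
Variables (R : realType) (d k : nat).
Local Notation Vec := (Vec R d).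
Local Notation Conf := (Conf R d k).
Implicit Types (X Y : Conf) (t v : Vec) (A B : 'M[R]_d) (x : Vec * 'I_k).

Lemma shiftpK t : cancel (@shiftp R d k t) (shiftp (- t)).
Proof. by case=> v i; rewrite /shiftp /= addKr. Qed.

Lemma shiftpNK t : cancel (@shiftp R d k (- t)) (shiftp t).
Proof. by case=> v i; rewrite /shiftp /= addNKr. Qed.

Lemma shiftcE t X y : shiftc t X y <-> X (shiftp (- t) y).
Proof.
split; first by move=> [x Xx <-]; rewrite shiftpK.
by move=> Xy; exists (shiftp (- t) y) => //; rewrite shiftpNK.
Qed.

Lemma shiftcK t : cancel (@shiftc R d k t) (shiftc (- t)).
Proof.
move=> X; apply/seteqP; split => y.
  by move=> /shiftcE; rewrite opprK => /shiftcE; rewrite shiftpK.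
by move=> Xy; apply/shiftcE; rewrite opprK; apply/shiftcE; rewrite shiftpK.
Qed.

Lemma shiftc_inj t : injective (@shiftc R d k t).
Proof. exact: can_inj (@shiftcK t). Qed.

Lemma interior_tile_shift (T : 'I_k -> set Vec) t x z :
  interior (tile T (shiftp t x)) z -> interior (tile T x) (- t + z).
Proof.
rewrite /interior -{1}[z](addNKr t) => /nbhsDr.
apply: filterS => w [y Ty] /= h; exists y => //.
by apply: (@addrI _ t); rewrite addrA.
Qed.

Lemma admissible_shift B G T t X : union_of_translates B G -> lat B t ->
  admissible G T X -> admissible G T (shiftc t X).
Proof.
move=> uG Bt [inG uniq_site disj]; split.
- by move=> _ [x Xx <-]; exact: translates_latD uG Bt (inG _ Xx).
- move=> _ _ [x Xx <-] [y Xy <-] /= e.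
  by rewrite (uniq_site x y) // (addrI _ e).
- move=> _ _ [x Xx <-] [y Xy <-] /= e.
  have ne : x.1 <> y.1 by move=> e'; apply: e; rewrite e'.
  apply/seteqP; split => // z [/interior_tile_shift hx /interior_tile_shift hy].
  have : (interior (tile T x) `&` interior (tile T y)) (- t + z) by [].
  by rewrite disj.
Qed.

Lemma cellN_shift A t n v : cellN A t n (t + v) <-> cellN A 0 n v.
Proof.
split => -[m [mb [u cu e]]]; exists m; split => //; exists u => //.
  by apply: (@addrI _ t); rewrite add0r -e !addrA.
by rewrite -e add0r !addrA.
Qed.

Lemma restr_shift A t n X :
  restr (shiftc t X) (cellN A t n) = shiftc t (restr X (cellN A 0 n)).
Proof.
apply/seteqP; split => y.
  by move=> [[x Xx <-] c]; exists x => //; split => //; move/cellN_shift: c.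
by move=> [x [Xx c] <-]; split; [exists x | apply/cellN_shift].
Qed.

Lemma correct_wrt_shift A t Xb Y :
  correct_wrt A t (shiftc t Xb) (shiftc t Y) <-> correct_wrt A 0 Xb Y.
Proof. by rewrite /correct_wrt !restr_shift; split => [/shiftc_inj | ->]. Qed.

End Translation.

Section MatrixNorm.
Variable R : realType.

Lemma entry_le_norm m n (v : 'M[R]_(m, n)) i j : `|v i j| <= `|v|.
Proof.
rewrite [`|v|]mx_normrE.
exact: (le_bigmax 0 (fun ij : 'I_m * 'I_n => `|v ij.1 ij.2|) (i, j)).
Qed.

Lemma norm_le_entries m n (v : 'M[R]_(m, n)) M : 0 <= M ->
  (forall i j, `|v i j| <= M) -> `|v| <= M.
Proof. by move=> M0 h; rewrite [`|v|]mx_normrE; apply: bigmax_le => // ij _. Qed.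

Lemma norm_mulmx_le m n p (M : 'M[R]_(m, n)) (v : 'M[R]_(n, p)) :
  `|M *m v| <= (`|M| *+ n) * `|v|.
Proof.
apply: norm_le_entries => [|i j]; first by rewrite mulr_ge0 ?mulrn_wge0.
rewrite mxE (le_trans (ler_norm_sum _ _ _)) //.
apply: (@le_trans _ _ (\sum_(c < n) `|M| * `|v|)).
  by apply: ler_sum => c _; rewrite normrM ler_pM ?entry_le_norm.
by rewrite sumr_const card_ord mulrnAl.
Qed.

Lemma bounded_setP d (L : set (Vec R d)) :
  bounded_set L <-> exists M, forall y, L y -> `|y| <= M.
Proof.
split => [[M0 [_ h]] | [M h]].
  by exists (M0 + 1) => y Ly; apply: (h (M0 + 1)) => //; rewrite ltrDl.
exists M; split; first exact: num_real.
by move=> M1 hM y Ly /=; apply: le_trans (h _ Ly) (ltW hM).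
Qed.

End MatrixNorm.

Section Sites.
Variables (R : realType) (d k : nat).
Local Notation Vec := (Vec R d).

Definition int_box (M : nat) : seq 'cV[int]_d :=
  [seq map_mx (fun c : 'I_(M + M).+1 => c%:Z - M%:Z) w
  | w <- enum ('cV['I_(M + M).+1]_d)].

Lemma mem_int_box M (z : 'cV[int]_d) : (forall r, `|z r 0| <= M%:Z) -> z \in int_box M.
Proof.
move=> h.
pose w : 'cV['I_(M + M).+1]_d := map_mx (fun c : int => inord (absz (c + M%:Z))) z.
suff -> : z = map_mx (fun c : 'I_(M + M).+1 => c%:Z - M%:Z) w.
  by apply: map_f; rewrite mem_enum.
apply/matrixP => i j; rewrite !mxE (ord1 j).
by have hi := h i; rewrite inordK; lia.
Qed.

Lemma finite_sites_in_bounded B G (L : set Vec) :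
  B \in unitmx -> union_of_translates B G -> bounded_set L ->
  exists s : seq (Vec * 'I_k), forall x, G x.1 -> L x.1 -> x \in s.
Proof.
move=> uB [a [_ ->]] /bounded_setP [ML hL].
pose Sa := \big[Num.max/0]_(i < size a) `|nth 0 a i|.
pose K := (`|invmx B| *+ d) * (ML + Sa).
pose M := Num.Def.archi_bound `|K|.
exists [seq (nth 0 a p.1 + B *m intvec R p.2, j)
       | p <- [seq (i, z) | i <- iota 0 (size a), z <- int_box M], j <- enum 'I_k].
move=> [v j] /= [i [ia [t [z _ <-] ->]]] Lv.
apply: (@allpairs_f _ _ _ (fun p j => (nth 0 a p.1 + B *m intvec R p.2, j)) _ _ (i, z) j);
  last by rewrite mem_enum.
apply: (@allpairs_f _ _ _ (fun i z => (i, z))); first by rewrite mem_iota.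
apply: mem_int_box => r.
have ez : intvec R z = invmx B *m (nth 0 a i + B *m intvec R z - nth 0 a i).
  by rewrite addrC addKr mulKmx.
have nb : `|nth 0 a i| <= Sa.
  exact: (le_bigmax 0 (fun i0 : 'I_(size a) => `|nth 0 a i0|) (Ordinal ia)).
have zK : `|(z r 0)%:~R : R| <= K.
  have -> : (z r 0)%:~R = (intvec R z) r 0 by rewrite mxE.
  apply: le_trans (entry_le_norm _ _ _) _.
  rewrite ez; apply: le_trans (norm_mulmx_le _ _) _.
  rewrite ler_wpM2l ?mulrn_wge0 //.
  by apply: le_trans (ler_normB _ _) _; rewrite lerD ?hL.
have KM : K < M%:R by apply: le_lt_trans (ler_norm K) (archi_boundP _).
rewrite -intr_norm in zK.
have : (`|z r 0|%:~R : R) < (M%:Z)%:~R by apply: le_lt_trans zK _.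
by rewrite ltr_int => /ltW.
Qed.

End Sites.

Section Diagonal.
Variables (C : Type) (Y : nat -> C) (Q : nat -> C -> Prop).

Definition infinitely_often (P : nat -> Prop) := forall N, exists m, (N <= m)%N /\ P m.

(* Keeps the indices of [P] at which [Q q] has the truth value it has infinitely
   often on [P]: [Q q (Y m)] if that happens infinitely often, its negation
   otherwise. *)
Definition settle (P : nat -> Prop) q : nat -> Prop := fun m =>
  P m /\ (if pselect (infinitely_often (fun m => P m /\ Q q (Y m)))
          then Q q (Y m) else ~ Q q (Y m)).

Lemma infinitely_often_settle P q :
  infinitely_often P -> infinitely_often (settle P q).
Proof.
move=> iP; rewrite /settle; case: pselect => [//|notQ].
have [N0 hN0] : exists N0, forall m, (N0 <= m)%N -> ~ (P m /\ Q q (Y m)).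
  apply: contrapT => hn; apply: notQ => N.
  apply: contrapT => hm; apply: hn; exists N => m Nm hPQ; apply: hm.
  by exists m.
move=> N; have [m [Nm Pm]] := iP (maxn N N0).
exists m; split; first by apply: leq_trans Nm; rewrite leq_maxl.
split => // Qm; apply: (hN0 m) => //.
by apply: leq_trans Nm; rewrite leq_maxr.
Qed.

Fixpoint settled (q : nat) : nat -> Prop :=
  if q is q'.+1 then settle (settled q') q' else fun _ => True.

Lemma infinitely_often_settled q : infinitely_often (settled q).
Proof.
elim: q => [|q IH] /=; first by move=> N; exists N.
exact: infinitely_often_settle.
Qed.

Lemma settled_le q q' m : (q <= q')%N -> settled q' m -> settled q m.
Proof. by move=> /subnK <-; elim: (q' - q)%N => [|n IH] //= [/IH]. Qed.

Definition index_from (P : nat -> Prop) (N : nat) : nat :=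
  if pselect (exists m, (N <= m)%N /\ P m) is left h then proj1_sig (cid h) else N.

Lemma index_fromP P N : infinitely_often P -> (N <= index_from P N)%N /\ P (index_from P N).
Proof.
move=> iP; rewrite /index_from; case: pselect => [h|[]]; last exact: iP.
by case: (cid h).
Qed.

Fixpoint diagonal_index (j : nat) : nat :=
  if j is j'.+1 then index_from (settled j'.+2) (diagonal_index j').+1
  else index_from (settled 1) 0.

Lemma settled_diagonal_index j : settled j.+1 (diagonal_index j).
Proof. by case: j => [|j]; apply: (index_fromP _ (infinitely_often_settled _)).2. Qed.

Lemma diagonal_index_lt j : (diagonal_index j < diagonal_index j.+1)%N.
Proof. exact: (index_fromP _ (infinitely_often_settled _)).1. Qed.

Lemma diagonal_subsequence : exists phi : nat -> nat,
  (forall j, (phi j < phi j.+1)%N) /\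
  forall q, (forall j, (q <= j)%N -> Q q (Y (phi j))) \/
            (forall j, (q <= j)%N -> ~ Q q (Y (phi j))).
Proof.
exists diagonal_index; split => [|q]; first exact: diagonal_index_lt.
have settled_q j : (q <= j)%N -> settled q.+1 (diagonal_index j).
  by move=> qj; apply: settled_le (settled_diagonal_index j).
by case: (pselect (infinitely_often (fun m => settled q m /\ Q q (Y m)))) => h;
  [left | right] => j /settled_q /= [_]; rewrite /settle; case: pselect.
Qed.

End Diagonal.

Section LocalConvergence.
Variables (R : realType) (d k : nat).
Local Notation Vec := (Vec R d).
Local Notation Conf := (Conf R d k).
Implicit Types (Z : nat -> Conf) (X : Conf).

Lemma bounded_set1 (v : Vec) : bounded_set [set v].
Proof. by apply/bounded_setP; exists `|v| => y ->. Qed.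

Lemma local_conv_shift Z X N :
  local_conv Z X -> local_conv (fun j => Z (N + j)%N) X.
Proof.
move=> lc L bL; have [M hM] := lc L bL; exists M => n Mn; apply: hM.
exact: leq_trans Mn (leq_addl _ _).
Qed.

Lemma local_conv_eventually Z X x : local_conv Z X -> X x ->
  exists N, forall n, (N <= n)%N -> Z n x.
Proof.
move=> lc Xx; have [N hN] := lc _ (bounded_set1 x.1).
exists N => n Nn; have : restr X [set x.1] x by [].
by rewrite -(hN n Nn) => -[].
Qed.

Lemma admissible_local_limit G T Z X :
  (forall n, admissible G T (Z n)) -> local_conv Z X -> admissible G T X.
Proof.
move=> aZ lc.
have both x y : X x -> X y -> exists n, Z n x /\ Z n y.
  move=> /(local_conv_eventually lc) [N1 h1] /(local_conv_eventually lc) [N2 h2].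
  by exists (maxn N1 N2); split; [apply: h1 | apply: h2]; rewrite ?leq_maxl ?leq_maxr.
split.
- move=> x /(local_conv_eventually lc) [N hN].
  by have [inG _ _] := aZ N; apply/inG/hN.
- move=> x y Xx Xy; have [n [Zx Zy]] := both x y Xx Xy.
  by have [_ uniq_site _] := aZ n; exact: uniq_site.
- move=> x y Xx Xy; have [n [Zx Zy]] := both x y Xx Xy.
  by have [_ _ disj] := aZ n; exact: disj.
Qed.

(* Configurations are sequentially compact: by [diagonal_subsequence] over an
   enumeration of the sites [(a_i + B z, j)] of [G], every site is eventually
   always occupied or always free along the subsequence, and [finite_sites_in_bounded]
   makes this uniform on bounded sets. *)
Lemma local_conv_subseq B G T (Y : nat -> Conf) :
  B \in unitmx -> union_of_translates B G -> (forall m, admissible G T (Y m)) ->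
  exists phi : nat -> nat, (forall j, (phi j < phi j.+1)%N) /\
    exists X, local_conv (fun j => Y (phi j)) X.
Proof.
move=> uB uG aY; have [a [_ Ga]] := uG.
pose Q (q : nat) (c : Conf) : Prop :=
  if @unpickle (nat * 'cV[int]_d * 'I_k)%type q is Some p
  then c (nth 0 a p.1.1 + B *m intvec R p.1.2, p.2) else False.
have [phi [phiI hq]] := diagonal_subsequence Y Q.
exists phi; split => //.
pose X x := exists J, forall j, (J <= j)%N -> Y (phi j) x.
exists X.
have inG j x : Y (phi j) x -> G x.1 by have [inG _ _] := aY (phi j); exact: inG.
have inX x : X x -> G x.1 by move=> [J /(_ J (leqnn J)) /inG].
have stable x : exists N, forall j, (N <= j)%N -> (Y (phi j) x <-> X x).
  have [|nGx] := pselect (G x.1); last first.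
    by exists 0%N => j _; split => [/inG | /inX].
  rewrite Ga => -[i [ia [t [z _ <-] e]]].
  pose q := pickle (i, z, x.2).
  have eQ c : Q q c <-> c x by rewrite /Q /q pickleK /= -e; case: x {q} e.
  case: (hq q) => [hl|hr]; exists q => j qj.
    by split => _; [exists q => j' /hl/eQ | exact/eQ/hl].
  split => [/eQ|[J hJ]]; first by have := hr j qj.
  by have /eQ := hJ (maxn q J) (leq_maxr _ _); have := hr (maxn q J) (leq_maxl _ _).
move=> L bL.
have [s hs] := finite_sites_in_bounded k uB uG bL.
have [N hN] : exists N, forall x, x \in s -> forall j, (N <= j)%N -> (Y (phi j) x <-> X x).
  elim: s {hs} => [|x s [N IH]]; first by exists 0%N.
  have [Nx hx] := stable x.
  exists (maxn N Nx) => y; rewrite in_cons => /orP [/eqP -> | ys] j hj.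
    by apply: hx; exact: leq_trans (leq_maxr _ _) hj.
  by apply: IH => //; exact: leq_trans (leq_maxl _ _) hj.
exists N => j hj; apply/seteqP; split => x [h Lx]; split => //.
- by apply/(hN x _ j hj) => //; apply: hs (inG _ _ h) Lx.
- by apply/(hN x _ j hj) => //; apply: hs (inX _ h) Lx.
Qed.

End LocalConvergence.

Section Cells.
Variables (R : realType) (d : nat).
Implicit Types (A : 'M[R]_d) (t v : Vec R d).

Lemma cellN_sub A t n n' : (n <= n')%N -> cellN A t n `<=` cellN A t n'.
Proof.
move=> nn' v [m [mb c]]; exists m; split => // i.
by apply: le_trans (mb i) _; rewrite lez_nat.
Qed.

Lemma bounded_cellN A n : bounded_set (cellN A 0 n).
Proof.
apply/bounded_setP; exists ((`|A| *+ d) * (n%:R + 1)) => _ [m [mb [u cu <-]]].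
rewrite add0r -mulmxDr; apply: le_trans (norm_mulmx_le _ _) _.
rewrite ler_wpM2l ?mulrn_wge0 //.
apply: norm_le_entries => // i j; rewrite (ord1 j) !mxE.
apply: le_trans (ler_normD _ _) _; apply: lerD.
  by rewrite -intr_norm pmulrn ler_int.
by have /andP[u0 u1] := cu i; rewrite ger0_norm // ltW.
Qed.

Lemma cellN_exhaustive A v : A \in unitmx -> exists n, cellN A 0 n v.
Proof.
move=> uA; pose w := invmx A *m v.
pose m : 'cV[int]_d := map_mx (fun r => Num.floor r) w.
exists (\max_(i < d) absz (m i ord0))%N; exists m; split.
  move=> i; rewrite lez_nat.
  exact: (@leq_bigmax_cond _ (fun _ => true) (fun i0 : 'I_d => absz (m i0 ord0)) i).
exists (w - intvec R m); last by rewrite add0r -mulmxDr addrC subrK /w mulKVmx.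
move=> i; have -> : (w - intvec R m) i 0 = w i 0 - (Num.floor (w i 0))%:~R.
  by rewrite !mxE.
have := floor_itv (w i 0); rewrite rmorphD /= rmorph1 => /andP[h1 h2].
by rewrite subr_ge0 h1 /= ltrBlDl.
Qed.

End Cells.

Section Allocation.
Variables (R : realType) (d k : nat) (B : 'M[R]_d) (G : set (Vec R d))
  (T : 'I_k -> set (Vec R d)) (mu : 'I_k -> R) (S : set (BVec R d))
  (lam : {measure set (BVec R d) -> \bar R}) (phi : Phi R d k) (p : R).
Hypotheses (uB : B \in unitmx) (uG : union_of_translates B G)
  (inv : invariant_space B S lam) (va : volume_allocation B G T S lam phi).
Local Notation Vec := (Vec R d).
Local Notation BVec := (BVec R d).
Local Notation Conf := (Conf R d k).
Local Notation vol := (vol S lam phi).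
Local Notation perfect := (perfect G T mu S lam phi p).

Lemma measurable_translation (t : Vec) :
  measurable_fun [set: BVec] (fun s : BVec => (t + (s : Vec) : BVec)).
Proof.
have mE : @measurable _ BVec = <<s (@open Vec) >> by [].
apply: (@measurability _ _ _ _ _ _ _ mE).
move=> _ [U oU <-]; rewrite setTI; apply: sub_sigma_algebra.
move=> z /= Uz; have := oU _ Uz; rewrite /interior /= => h.
by move/nbhsDr: h.
Qed.

Local Open Scope ereal_scope.

(* The allocation is translation covariant a.e. by (i) and [lam] is translation
   invariant, so the integral is unchanged after pushing forward by [s |-> t + s]. *)
Lemma vol_shift t X x : lat B t -> admissible G T X -> X x ->
  vol (shiftc t X) (shiftp t x) = vol X x.
Proof.
move=> Bt aX Xx; have [mS Sinv laminv] := inv; have [mphi phi_shift _ _] := va.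
have asX := admissible_shift uG Bt aX.
have X0 : X !=set0 by exists x.
have sXx : shiftc t X (shiftp t x) by exists x.
have [mg g01] := mphi _ _ asX (ex_intro _ _ sXx) sXx.
have [mf _] := mphi _ _ aX X0 Xx.
set g := phi (shiftc t X) (shiftp t x).
pose tau := fun s : BVec => (t + (s : Vec))%R : BVec.
have mtau := measurable_translation t.
have tauS : tau @^-1` S = S by apply/seteqP; split => s /=; rewrite -Sinv.
have mgt : measurable_fun S (g \o tau).
  apply: (measurable_comp mS) => //; last exact: measurable_funS mtau.
  by move=> _ [s Ss <-]; rewrite /tau -Sinv.
rewrite /vol; transitivity (\int[lam]_(s in S) ((EFin \o g) \o tau) s).
  rewrite -[in RHS]tauS -(ge0_integral_pushforward mtau) //; last first.
  - by move=> y /[!inE] Sy; rewrite lee_fin; have /andP[] := g01 _ Sy.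
  - exact/measurable_EFinP.
  apply: eq_measure_integral => A mA AS.
  by rewrite /pushforward /= /pushforward laminv.
apply: ae_eq_integral => //; try exact/measurable_EFinP.
by apply: filterS (phi_shift _ _ _ aX X0 Xx Bt) => s h Ss /=; rewrite /g /tau h.
Qed.

Lemma perfect_shift t Xb : lat B t -> perfect Xb -> perfect (shiftc t Xb).
Proof.
move=> Bt [aXb [x0 Xx0] hv]; split; first exact: admissible_shift uG Bt aXb.
  by exists (shiftp t x0); exists x0.
by move=> _ [x Xx <-]; rewrite vol_shift // hv.
Qed.

(* Lower semicontinuity of the allocated volume: (ii) bounds [phi X x] by the
   liminf of [phi (Z n) x], and Fatou's lemma passes to the integrals. *)
Lemma vol_local_limit_le (Z : nat -> Conf) X x (c : \bar R) :
  (forall n, admissible G T (Z n)) -> admissible G T X -> local_conv Z X ->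
  (forall n, Z n x) -> X x -> (forall n, vol (Z n) x <= c) ->
  vol X x <= c.
Proof.
move=> aZ aX lc Zx Xx hc.
have [mS _ _] := inv; have [mphi _ phi_lsc _] := va.
have [mf f01] := mphi _ _ aX (ex_intro _ x Xx) Xx.
have mg n := mphi _ _ (aZ n) (ex_intro _ x (Zx n)) (Zx n).
pose g n s := (phi (Z n) x s)%:E.
have mgn n : measurable_fun S (g n) by apply/measurable_EFinP; exact: (mg n).1.
have g0 n s : S s -> 0 <= g n s.
  by move=> Ss; rewrite lee_fin; case/andP: ((mg n).2 s Ss).
apply: (@le_trans _ _ (\int[lam]_(s in S) limn_einf (fun n => g n s))).
  apply: ae_ge0_le_integral => //.
  - by move=> s Ss; rewrite lee_fin; case/andP: (f01 s Ss).
  - exact/measurable_EFinP.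
  - move=> s Ss; rewrite limn_einf_lim; apply: lime_ge; first exact: is_cvg_einfs.
    by apply: nearW => n; apply: le_ereal_inf_tmp => _ [m _ <-]; exact: g0.
  - apply: measurableT_comp => //; apply: measurable_fun_limn_esup => n.
    exact: measurableT_comp.
  - exact: phi_lsc.
apply: le_trans (fatou lam mS mgn g0) _; apply: le_trans (limn_einf_sup _) _.
rewrite limn_esup_lim; apply: lime_le; first exact: is_cvg_esups.
by apply: nearW => n; apply: ge_ereal_sup => _ [m _ <-]; exact: hc.
Qed.

Hypothesis hA : assumptionA G T mu S lam phi p.

Lemma perfect_local_limit (Z : nat -> Conf) X :
  (forall j, admissible G T (Z j)) -> local_conv Z X -> X !=set0 ->
  (forall x, X x -> forall e : R, (0 < e)%R -> exists J, forall j, (J <= j)%N ->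
     Z j x -> p%:E * vol (Z j) x <= (mu x.2 + e)%:E) ->
  perfect X.
Proof.
move=> aZ lc X0 almost; have [p0 volA _] := hA.
have aX := admissible_local_limit aZ lc.
split => // x Xx; apply/eqP; rewrite eq_le volA // andbT.
apply/lee_addgt0Pr => e e0.
have [J hJ] := almost x Xx e e0.
have [N hN] := local_conv_eventually lc Xx.
have ZMx j : Z (maxn J N + j)%N x by apply/hN/(leq_trans (leq_maxr J N))/leq_addr.
rewrite -lee_pdivlMl // -EFinD.
apply: (vol_local_limit_le (fun j => aZ _) aX (local_conv_shift (maxn J N) lc) ZMx Xx).
move=> j; rewrite lee_pdivlMl //; apply: hJ (ZMx j).
exact/(leq_trans (leq_maxl J N))/leq_addr.
Qed.

Lemma near_perfect_at_origin (A : 'M[R]_d) : A \in unitmx ->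
  exists delta : R, (0 < delta)%R /\ exists n : nat, (1 <= n)%N /\
  forall Y : Conf, admissible G T Y ->
    ~ (exists Xb, perfect Xb /\ correct_wrt A 0%R Xb Y) ->
    restr Y (cellN A 0%R 1) = set0 \/
    exists x, restr Y (cellN A 0%R n) x /\ (mu x.2 + delta)%:E <= p%:E * vol Y x.
Proof.
move=> uA; apply: contrapT => hneg.
pose bad m (Y : Conf) := [/\ admissible G T Y,
  ~ (exists Xb, perfect Xb /\ correct_wrt A 0%R Xb Y),
  restr Y (cellN A 0%R 1) !=set0 &
  forall x, restr Y (cellN A 0%R m.+1) x -> p%:E * vol Y x < (mu x.2 + m.+1%:R^-1)%:E].
have /choice[Y hY] : forall m, exists Y, bad m Y.
  move=> m; apply: contrapT => hm; apply: hneg.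
  exists (m.+1%:R^-1)%R; split; first by rewrite invr_gt0.
  exists m.+1; split => // Y aY nc.
  have [|/eqP/set0P Y0] := pselect (restr Y (cellN A 0%R 1) = set0); [by left | right].
  apply: contrapT => hex; apply: hm; exists Y; split => // x hx.
  by rewrite ltNge; apply/negP => hle; apply: hex; exists x.
have aY m : admissible G T (Y m) by case: (hY m).
have [ph [ph_incr [X lc]]] := local_conv_subseq uB uG aY.
have ph_ge j : (j <= ph j)%N.
  by elim: j => // j IH; exact: leq_ltn_trans IH (ph_incr j).
have [N hN] := lc _ (bounded_cellN A 1).
have eN := hN N (leqnn N).
have X0 : X !=set0.
  by have [_ _ [x] + _] := hY (ph N); rewrite eN => -[Xx _]; exists x.
have pX : perfect X.
  apply: (perfect_local_limit (fun j => aY (ph j)) lc X0) => x Xx e e0.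
  have [m0 _ hm0] := near_infty_natSinv_lt (PosNum e0).
  have [n0 hn0] := cellN_exhaustive x.1 uA.
  exists (maxn m0 n0) => j hj Yx.
  have [_ _ _ hlt] := hY (ph j).
  apply/ltW/(lt_le_trans (hlt x _)).
    by split => //; apply: cellN_sub hn0; have := ph_ge j; lia.
  rewrite lee_fin lerD2l; apply/ltW/hm0 => /=.
  by have := ph_ge j; lia.
have [_ nc _ _] := hY (ph N).
by apply: nc; exists X.
Qed.

End Allocation.

Theorem lemma6 (R : realType) (d k : nat)
  (B : 'M[R]_d) (G : set (Vec R d))
  (T : 'I_k -> set (Vec R d)) (mu : 'I_k -> R)
  (S : set (BVec R d)) (lam : {measure set (BVec R d) -> \bar R})
  (phi : Phi R d k) (p : R) (A : 'M[R]_d) :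
  (0 < d)%N ->
  B \in unitmx ->
  union_of_translates B G ->
  (forall i, T i !=set0 /\ bounded_set (T i)) ->
  (forall i, 0 < mu i) -> \sum_i mu i ^+ 2 = 1 ->
  invariant_space B S lam ->
  volume_allocation B G T S lam phi ->
  assumptionA G T mu S lam phi p ->
  assumptionB B G T mu S lam phi p A ->
  exists delta : R, 0 < delta /\
  exists n : nat, (1 <= n)%N /\
  forall z : 'cV[int]_d,
    let t := A *m intvec R z in
    forall X : Conf R d k, admissible G T X ->
      ~ (exists Xb, perfect G T mu S lam phi p Xb /\ correct_wrt A t Xb X) ->
      restr X (cellN A t 1) = set0 \/
      exists x, restr X (cellN A t n) x /\
        ((mu x.2 + delta)%:E <= p%:E * vol S lam phi X x)%E.
Proof.
move=> _ uB uG _ _ _ inv va hA [[uA AB] _ _ _].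
have [delta [delta0 [n [n1 at_origin]]]] := near_perfect_at_origin uB uG inv va hA uA.
exists delta; split => //; exists n; split => // z t X aX incorrect.
have Bt : lat B t by apply: AB; exists z.
pose Y := shiftc (- t) X.
have XE : X = shiftc t Y by rewrite /Y -{1}[t]opprK shiftcK.
have aY := admissible_shift uG (latN Bt) aX.
have := at_origin Y aY.
case=> [[Xb [pXb cXb]] | Y0 | [x [Yx hx]]].
- apply: incorrect; exists (shiftc t Xb).
  rewrite XE correct_wrt_shift; split => //.
  exact: (perfect_shift uG inv va Bt pXb).
- by left; rewrite XE restr_shift Y0 /shiftc image_set0.
- right; exists (shiftp t x); split; first by rewrite XE restr_shift; exists x.
  by case: Yx => Yx _; rewrite XE (vol_shift uG inv va Bt aY Yx).
Qed.
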